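(* Let $D=((a_n),(b_n))$ be an almost periodic divisor with a regular indexing. Then for every sequence $(h_k)\subset\mathbb{C}$ there exist a subsequence $(h'_k)$, a divisor $\widetilde D=((\tilde a_n),(\tilde b_n))$ which is almost periodic with a regular indexing, and bijections $\tilde\sigma(k,\cdot):\mathbb{N}\to\mathbb{N}$ such that $$\sup_n|a_{\tilde\sigma(k,n)}+h'_k-\tilde a_n|\to0,\qquad \sup_n|b_{\tilde\sigma(k,n)}+h'_k-\tilde b_n|\to0\qquad (k\to\infty).$$
   Context: A divisor $D=((a_n)_{n\in\mathbb{N}},(b_n)_{n\in\mathbb{N}})$ consists of two sequences in $\mathbb{C}$ without finite accumulation points. It is almost periodic with a regular indexing if for every $\varepsilon>0$ there is $L$ such that every disc of radius $L$ contains a point $\tau$ for which some bijection $\sigma:\mathbb{N}\to\mathbb{N}$ satisfies $|a_n+\tau-a_{\sigma(n)}|<\varepsilon$ and $|b_n+\tau-b_{\sigma(n)}|<\varepsilon$ for all $n$. *)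

From Stdlib Require Import Reals.
Open Scope R_scope.

Definition Cpx : Type := (R * R)%type.
Definition Cadd (z w : Cpx) : Cpx := (fst z + fst w, snd z + snd w).
Definition Csub (z w : Cpx) : Cpx := (fst z - fst w, snd z - snd w).
Definition Cmod (z : Cpx) : R := sqrt (fst z * fst z + snd z * snd z).

Definition bijN (s : nat -> nat) : Prop :=
  exists g : nat -> nat, (forall n, g (s n) = n) /\ (forall n, s (g n) = n).

(* a sequence without finite accumulation points (counting multiplicity):
   every disc contains only finitely many terms, i.e. |a_n| -> infinity *)
Definition no_finite_accum (a : nat -> Cpx) : Prop :=
  forall M : R, exists N : nat, forall n : nat, (N <= n)%nat -> M < Cmod (a n).

Definition divisor (a b : nat -> Cpx) : Prop :=
  no_finite_accum a /\ no_finite_accum b.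

Definition ap_regular (a b : nat -> Cpx) : Prop :=
  forall eps : R, 0 < eps ->
    exists L : R, 0 < L /\
      forall c : Cpx, exists tau : Cpx, Cmod (Csub tau c) < L /\
        exists sigma : nat -> nat, bijN sigma /\
          forall n : nat,
            Cmod (Csub (Cadd (a n) tau) (a (sigma n))) < eps /\
            Cmod (Csub (Cadd (b n) tau) (b (sigma n))) < eps.

Definition strictly_increasing (phi : nat -> nat) : Prop :=
  forall i j : nat, (i < j)%nat -> (phi i < phi j)%nat.

From Stdlib Require Import Reals Lra Lia Psatz ClassicalEpsilon FunctionalExtensionality.
Open Scope R_scope.

(* Compactness of the family of translates of an almost periodic divisor.

   Write D + c for the divisor D = (a, b) translated by c, and call (a', b')
   e-close to (a, b) when a bijection of the indices matches them termwise up
   to e.  The theorem is a Bolzano-Weierstrass statement for this pseudometric: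
   1. almost periodicity makes every translate D + c e-close to a translate
      D + r with |r| < L(e) (translate_close_bounded);
   2. an infinite pigeonhole principle in C (pigeonhole_complex) then gives,
      inside any infinite set of indices k, an infinite subset on which all
      D + h_k are e-close to one translate D + p (refine_translates);
   3. a diagonal extraction (diagonal_extraction) yields a subsequence phi and
      centres p_m with D + h_(phi k) (1/2)^m-close to D + p_m for k >= m;
   4. the pseudometric is complete (close_complete), so the Cauchy sequence
      D + p_m has a limit divisor D~;
   5. D~ is a divisor (divisor_close), and it is almost periodic with a
      regular indexing because this property is translation invariant and
      closed under limits (ap_regular_translate, ap_regular_limit). *)

Ltac cpx_ring := apply injective_projections; unfold Cadd, Csub; simpl; ring.

Lemma Cmod_nonneg (z : Cpx) : 0 <= Cmod z.
Proof. apply sqrt_pos. Qed.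

Lemma Cmod_sqr (z : Cpx) : Cmod z * Cmod z = fst z * fst z + snd z * snd z.
Proof. apply sqrt_sqrt; nra. Qed.

Lemma dot_le_Cmod_mul (z w : Cpx) : fst z * fst w + snd z * snd w <= Cmod z * Cmod w.
Proof.
  apply Rle_trans with (Rabs (fst z * fst w + snd z * snd w)); [apply Rle_abs|].
  rewrite <- (Rabs_right (Cmod z * Cmod w))
    by (apply Rle_ge, Rmult_le_pos; apply Cmod_nonneg).
  apply Rsqr_le_abs_0; unfold Rsqr.
  replace (Cmod z * Cmod w * (Cmod z * Cmod w))
    with ((Cmod z * Cmod z) * (Cmod w * Cmod w)) by ring.
  rewrite !Cmod_sqr.
  pose proof (pow2_ge_0 (fst z * snd w - snd z * fst w)); nra.
Qed.

Lemma Cmod_triangle (z w : Cpx) : Cmod (Cadd z w) <= Cmod z + Cmod w.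
Proof.
  pose proof (dot_le_Cmod_mul z w); pose proof (Cmod_sqr z); pose proof (Cmod_sqr w).
  pose proof (Cmod_nonneg z); pose proof (Cmod_nonneg w).
  unfold Cmod at 1; rewrite <- (sqrt_square (Cmod z + Cmod w)) by lra.
  apply sqrt_le_1_alt; unfold Cadd; simpl; nra.
Qed.

Lemma Rabs_fst_le_Cmod (z : Cpx) : Rabs (fst z) <= Cmod z.
Proof. rewrite <- sqrt_Rsqr_abs; unfold Cmod; apply sqrt_le_1_alt; unfold Rsqr; nra. Qed.

Lemma Rabs_snd_le_Cmod (z : Cpx) : Rabs (snd z) <= Cmod z.
Proof. rewrite <- sqrt_Rsqr_abs; unfold Cmod; apply sqrt_le_1_alt; unfold Rsqr; nra. Qed.

Lemma Cmod_le_Rabs_sum (z : Cpx) : Cmod z <= Rabs (fst z) + Rabs (snd z).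
Proof.
  pose proof (Rabs_pos (fst z)); pose proof (Rabs_pos (snd z)).
  rewrite <- (sqrt_square (Rabs (fst z) + Rabs (snd z))) by lra.
  unfold Cmod; apply sqrt_le_1_alt.
  pose proof (Rsqr_abs (fst z)); pose proof (Rsqr_abs (snd z)); unfold Rsqr in *; nra.
Qed.

Lemma Cdist_sym (z w : Cpx) : Cmod (Csub z w) = Cmod (Csub w z).
Proof. unfold Cmod, Csub; simpl; f_equal; ring. Qed.

Lemma Cdist_triangle (x y z : Cpx) :
  Cmod (Csub x z) <= Cmod (Csub x y) + Cmod (Csub y z).
Proof. replace (Csub x z) with (Cadd (Csub x y) (Csub y z)) by cpx_ring. apply Cmod_triangle. Qed.

Lemma Cmod_le_dist_add (z w : Cpx) : Cmod z <= Cmod (Csub z w) + Cmod w.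
Proof. replace z with (Cadd (Csub z w) w) at 1 by cpx_ring. apply Cmod_triangle. Qed.

Definition translate (a : nat -> Cpx) (c : Cpx) : nat -> Cpx := fun n => Cadd (a n) c.

Definition close (e : R) (a b a' b' : nat -> Cpx) : Prop :=
  exists s : nat -> nat, bijN s /\
    forall n, Cmod (Csub (a (s n)) (a' n)) <= e /\ Cmod (Csub (b (s n)) (b' n)) <= e.

Lemma bijN_id : bijN (fun n => n).
Proof. exists (fun n => n); split; reflexivity. Qed.

Lemma bijN_comp (s t : nat -> nat) : bijN s -> bijN t -> bijN (fun n => s (t n)).
Proof.
  intros [g [Hgs Hsg]] [g' [Hgt Htg]].
  exists (fun n => g' (g n)); split; intros n.
  - rewrite Hgs; apply Hgt.
  - rewrite Htg; apply Hsg.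
Qed.

Lemma close_termwise (e : R) (a b a' b' : nat -> Cpx) :
  (forall n, Cmod (Csub (a n) (a' n)) <= e /\ Cmod (Csub (b n) (b' n)) <= e) ->
  close e a b a' b'.
Proof. intros H; exists (fun n => n); split; [apply bijN_id | exact H]. Qed.

Lemma close_sym (e : R) (a b a' b' : nat -> Cpx) : close e a b a' b' -> close e a' b' a b.
Proof.
  intros [s [[g [Hgs Hsg]] H]]. exists g; split; [exists s; split; assumption|].
  intros n. destruct (H (g n)) as [Ha Hb]. rewrite Hsg in Ha, Hb.
  rewrite Cdist_sym, (Cdist_sym (b' _)). split; assumption.
Qed.

Lemma close_trans (e f : R) (a b a' b' a'' b'' : nat -> Cpx) :
  close e a b a' b' -> close f a' b' a'' b'' -> close (e + f) a b a'' b''.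
Proof.
  intros [s [Hs H]] [t [Ht H']]. exists (fun n => s (t n)); split; [apply bijN_comp; assumption|].
  intros n. destruct (H (t n)) as [Ha Hb], (H' n) as [Ha' Hb']. split.
  - pose proof (Cdist_triangle (a (s (t n))) (a' (t n)) (a'' n)); lra.
  - pose proof (Cdist_triangle (b (s (t n))) (b' (t n)) (b'' n)); lra.
Qed.

Lemma close_weaken (e f : R) (a b a' b' : nat -> Cpx) :
  e <= f -> close e a b a' b' -> close f a b a' b'.
Proof. intros Hef [s [Hs H]]. exists s; split; [exact Hs|]. intros n; destruct (H n); split; lra. Qed.

Lemma close_translate (e : R) (a b a' b' : nat -> Cpx) (c : Cpx) :
  close e a b a' b' -> close e (translate a c) (translate b c) (translate a' c) (translate b' c).
Proof.
  intros [s [Hs H]]. exists s; split; [exact Hs|].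
  intros n; unfold translate.
  replace (Csub (Cadd (a (s n)) c) (Cadd (a' n) c)) with (Csub (a (s n)) (a' n)) by cpx_ring.
  replace (Csub (Cadd (b (s n)) c) (Cadd (b' n) c)) with (Csub (b (s n)) (b' n)) by cpx_ring.
  apply H.
Qed.

Lemma close_translate_translate (a b : nat -> Cpx) (c c' : Cpx) :
  close (Cmod (Csub c c')) (translate a c) (translate b c) (translate a c') (translate b c').
Proof.
  apply close_termwise; intros n; unfold translate.
  replace (Csub (Cadd (a n) c) (Cadd (a n) c')) with (Csub c c') by cpx_ring.
  replace (Csub (Cadd (b n) c) (Cadd (b n) c')) with (Csub c c') by cpx_ring.
  split; apply Rle_refl.
Qed.

Lemma close_translate_self (a b : nat -> Cpx) (c : Cpx) :
  close (Cmod c) a b (translate a c) (translate b c).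
Proof.
  apply close_termwise; intros n; unfold translate.
  replace (Cmod c) with (Cmod (Csub (a n) (Cadd (a n) c))) by (unfold Cmod, Csub; simpl; f_equal; ring).
  split; [apply Rle_refl|].
  replace (Cmod (Csub (a n) (Cadd (a n) c))) with (Cmod (Csub (b n) (Cadd (b n) c)))
    by (unfold Cmod, Csub; simpl; f_equal; ring).
  apply Rle_refl.
Qed.

Lemma translate_translate (a : nat -> Cpx) (c d : Cpx) :
  translate (translate a c) d = translate a (Cadd c d).
Proof. apply functional_extensionality; intros n; unfold translate; cpx_ring. Qed.

Lemma ap_regular_close (a b : nat -> Cpx) (e : R) : ap_regular a b -> 0 < e ->
  exists L, 0 < L /\ forall c, exists tau,
    Cmod (Csub tau c) < L /\ close e a b (translate a tau) (translate b tau).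
Proof.
  intros Hap He. destruct (Hap e He) as [L [HL H]]. exists L; split; [exact HL|].
  intros c. destruct (H c) as [tau [Htau [s [Hs Hn]]]]. exists tau; split; [exact Htau|].
  exists s; split; [exact Hs|]. intros n; destruct (Hn n). unfold translate.
  rewrite !(Cdist_sym (_ (s n))). split; lra.
Qed.

Lemma translate_close_bounded (a b : nat -> Cpx) (e : R) : ap_regular a b -> 0 < e ->
  exists L, 0 < L /\ forall c, exists r,
    Cmod r < L /\ close e (translate a c) (translate b c) (translate a r) (translate b r).
Proof.
  intros Hap He. destruct (ap_regular_close a b e Hap He) as [L [HL H]].
  exists L; split; [exact HL|]. intros c.
  destruct (H c) as [tau [Htau Hclose]]. exists (Csub c tau); split; [rewrite Cdist_sym; exact Htau|].
  apply close_sym, (close_translate _ _ _ _ _ (Csub c tau)) in Hclose.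
  rewrite !translate_translate in Hclose.
  replace (Cadd tau (Csub c tau)) with c in Hclose by cpx_ring.
  exact Hclose.
Qed.

Lemma ap_regular_translate (a b : nat -> Cpx) (c : Cpx) :
  ap_regular a b -> ap_regular (translate a c) (translate b c).
Proof.
  intros Hap eps Heps. destruct (Hap eps Heps) as [L [HL H]]. exists L; split; [exact HL|].
  intros z. destruct (H z) as [tau [Htau [s [Hs Hn]]]]. exists tau; split; [exact Htau|].
  exists s; split; [exact Hs|]. intros n; unfold translate.
  replace (Csub (Cadd (Cadd (a n) c) tau) (Cadd (a (s n)) c))
    with (Csub (Cadd (a n) tau) (a (s n))) by cpx_ring.
  replace (Csub (Cadd (Cadd (b n) c) tau) (Cadd (b (s n)) c))
    with (Csub (Cadd (b n) tau) (b (s n))) by cpx_ring.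
  apply Hn.
Qed.

Lemma ap_regular_limit (at_ bt : nat -> Cpx) :
  (forall e, 0 < e -> exists a b, ap_regular a b /\ close e a b at_ bt) -> ap_regular at_ bt.
Proof.
  intros Happrox eps Heps.
  destruct (Happrox (eps / 4)) as [a [b [Hap Hclose]]]; [lra|].
  destruct (ap_regular_close a b (eps / 4) Hap) as [L [HL Hrel]]; [lra|].
  exists L; split; [exact HL|]. intros c.
  destruct (Hrel c) as [tau [Htau Hc]]. exists tau; split; [exact Htau|].
  assert (Hchain : close (eps / 4 + eps / 4 + eps / 4)
                     at_ bt (translate at_ tau) (translate bt tau)).
  { apply close_trans with (translate a tau) (translate b tau).
    - apply close_trans with a b; [apply close_sym; exact Hclose | exact Hc].
    - apply close_translate; exact Hclose. }
  destruct Hchain as [s [Hs Hn]]. exists s; split; [exact Hs|].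
  intros n; destruct (Hn n) as [Ha Hb]; unfold translate in Ha, Hb.
  rewrite Cdist_sym in Ha, Hb; split; lra.
Qed.

Definition infinite (S : nat -> Prop) : Prop := forall N, exists k, (N <= k)%nat /\ S k.

Lemma pigeonhole_interval (n : nat) : forall (A e : R) (S : nat -> Prop) (x : nat -> R),
  0 <= e -> infinite S -> (forall k, S k -> A <= x k <= A + INR n * e) ->
  exists p, infinite (fun k => S k /\ p <= x k <= p + e).
Proof.
  induction n as [|n IH]; intros A e S x He HS Hx.
  - exists A. intros N. destruct (HS N) as [k [Hk Sk]]. exists k.
    specialize (Hx k Sk). simpl in Hx. repeat split; auto; lra.
  - destruct (classic (infinite (fun k => S k /\ A <= x k <= A + e))) as [Hfirst|Hfirst].
    + exists A; exact Hfirst.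
    + (* beyond some N, no value lies in the first block: recurse on the others *)
      apply not_all_ex_not in Hfirst. destruct Hfirst as [N HN].
      destruct (IH (A + e) e (fun k => S k /\ (N <= k)%nat) x He) as [p Hp].
      * intros M. destruct (HS (Nat.max M N)) as [k [Hk Sk]].
        exists k; repeat split; auto; lia.
      * intros k [Sk Nk]. specialize (Hx k Sk). rewrite S_INR in Hx.
        assert (~ x k <= A + e) by (intros Hle; apply HN; exists k; repeat split; auto; lra).
        lra.
      * exists p. intros M. destruct (Hp M) as [k [Hk [[Sk _] Hxk]]]. exists k; auto.
Qed.

Lemma pigeonhole_real (L e : R) (S : nat -> Prop) (x : nat -> R) : 0 < e -> infinite S ->
  (forall k, S k -> Rabs (x k) <= L) ->
  exists p, infinite (fun k => S k /\ Rabs (x k - p) <= e).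
Proof.
  intros He HS Hx. destruct (INR_unbounded (2 * L / e)) as [n Hn].
  assert (Hne : 2 * L <= INR n * e).
  { apply (Rmult_lt_compat_r e) in Hn; [|exact He].
    unfold Rdiv in Hn; rewrite Rmult_assoc, Rinv_l in Hn; lra. }
  destruct (pigeonhole_interval n (- L) e S x) as [p Hp]; [lra | exact HS | |].
  - intros k Sk. specialize (Hx k Sk).
    pose proof (Rle_abs (x k)); pose proof (Rle_abs (- x k)); rewrite Rabs_Ropp in *; lra.
  - exists p. intros M. destruct (Hp M) as [k [Hk [Sk Hxk]]].
    exists k; repeat split; auto. apply Rabs_le; lra.
Qed.

Lemma pigeonhole_complex (L e : R) (S : nat -> Prop) (r : nat -> Cpx) : 0 < e -> infinite S ->
  (forall k, S k -> Cmod (r k) <= L) ->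
  exists p, infinite (fun k => S k /\ Cmod (Csub (r k) p) <= 2 * e).
Proof.
  intros He HS Hr.
  destruct (pigeonhole_real L e S (fun k => fst (r k))) as [p1 Hp1]; [exact He | exact HS | |].
  { intros k Sk. eapply Rle_trans; [apply Rabs_fst_le_Cmod | apply Hr, Sk]. }
  destruct (pigeonhole_real L e _ (fun k => snd (r k)) He Hp1) as [p2 Hp2].
  { intros k [Sk _]. eapply Rle_trans; [apply Rabs_snd_le_Cmod | apply Hr, Sk]. }
  exists (p1, p2). intros M. destruct (Hp2 M) as [k [Hk [[Sk H1] H2]]].
  exists k; repeat split; auto.
  eapply Rle_trans; [apply Cmod_le_Rabs_sum|]. simpl in *; lra.
Qed.

Lemma refine_translates (a b h : nat -> Cpx) (e : R) (S : nat -> Prop) :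
  ap_regular a b -> 0 < e -> infinite S ->
  exists S' p, infinite S' /\ (forall k, S' k -> S k) /\
    forall k, S' k -> close e (translate a (h k)) (translate b (h k)) (translate a p) (translate b p).
Proof.
  intros Hap He HS.
  destruct (translate_close_bounded a b (e / 2) Hap) as [L [HL Hbounded]]; [lra|].
  destruct (choice _ (fun k => Hbounded (h k))) as [r Hr].
  destruct (pigeonhole_complex L (e / 4) S r) as [p Hp]; [lra | exact HS | |].
  { intros k _. destruct (Hr k); lra. }
  exists (fun k => S k /\ Cmod (Csub (r k) p) <= 2 * (e / 4)), p.
  split; [exact Hp|]. split; [intros k [Sk _]; exact Sk|].
  intros k [_ Hrk]. apply close_weaken with (e / 2 + e / 2); [lra|].
  apply close_trans with (translate a (r k)) (translate b (r k)); [apply Hr|].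
  apply close_weaken with (Cmod (Csub (r k) p)); [lra | apply close_translate_translate].
Qed.

Definition InfSet : Type := {S : nat -> Prop | infinite S}.

Lemma infinite_all : infinite (fun _ => True).
Proof. intros N; exists N; split; [apply le_n | exact I]. Qed.

Definition pick (F : InfSet) (N : nat) : nat :=
  proj1_sig (constructive_indefinite_description _ (proj2_sig F N)).

Lemma pick_spec (F : InfSet) (N : nat) : (N <= pick F N)%nat /\ proj1_sig F (pick F N).
Proof. unfold pick. destruct (constructive_indefinite_description _ _); simpl; assumption. Qed.

Section DiagonalExtraction.

Variables (A : Type) (Q : nat -> A -> nat -> Prop).

Hypothesis refinable : forall m S, infinite S -> exists S' p,
  infinite S' /\ (forall k, S' k -> S k) /\ forall k, S' k -> Q m p k.

Lemma refine_step (m : nat) (F : InfSet) :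
  {x : InfSet * A | (forall k, proj1_sig (fst x) k -> proj1_sig F k) /\
                    forall k, proj1_sig (fst x) k -> Q m (snd x) k}.
Proof.
  apply constructive_indefinite_description.
  destruct (refinable m (proj1_sig F) (proj2_sig F)) as [S' [p [HS' [Hsub HQ]]]].
  exists (exist _ S' HS', p); split; assumption.
Qed.

(* The nested sequence of infinite sets with their centres. *)
Fixpoint stage (m : nat) : InfSet * A :=
  proj1_sig (refine_step m
    (match m with O => exist _ _ infinite_all | S m' => fst (stage m') end)).

Fixpoint diag (m : nat) : nat :=
  pick (fst (stage m)) (match m with O => O | S m' => S (diag m') end).

Lemma stage_nested (m k : nat) : (m <= k)%nat ->
  forall j, proj1_sig (fst (stage k)) j -> proj1_sig (fst (stage m)) j.
Proof.
  induction 1 as [|k _ IH]; intros j Hj; [exact Hj|].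
  apply IH. exact (proj1 (proj2_sig (refine_step (S k) (fst (stage k)))) j Hj).
Qed.

Lemma stage_spec (m j : nat) : proj1_sig (fst (stage m)) j -> Q m (snd (stage m)) j.
Proof. destruct m; apply (proj2 (proj2_sig (refine_step _ _))). Qed.

Lemma diag_in_stage (m : nat) : proj1_sig (fst (stage m)) (diag m).
Proof. destruct m; apply pick_spec. Qed.

Lemma diag_increasing : strictly_increasing diag.
Proof.
  assert (Hstep : forall k, (diag k < diag (S k))%nat).
  { intros k. exact (proj1 (pick_spec (fst (stage (S k))) (S (diag k)))). }
  intros i j Hij. induction Hij as [|j _ IH]; [apply Hstep|].
  specialize (Hstep j); lia.
Qed.

Theorem diagonal_extraction : exists (phi : nat -> nat) (p : nat -> A),
  strictly_increasing phi /\ forall m k, (m <= k)%nat -> Q m (p m) (phi k).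
Proof.
  exists diag, (fun m => snd (stage m)). split; [exact diag_increasing|].
  intros m k Hmk. apply stage_spec, (stage_nested m k Hmk), diag_in_stage.
Qed.

End DiagonalExtraction.

Definition half_pow (m : nat) : R := (/ 2) ^ m.

Lemma half_pow_pos (m : nat) : 0 < half_pow m.
Proof. apply pow_lt; lra. Qed.

Lemma half_pow_S (m : nat) : half_pow (S m) = half_pow m / 2.
Proof. unfold half_pow; simpl; lra. Qed.

Lemma half_pow_antitone (m k : nat) : (m <= k)%nat -> half_pow k <= half_pow m.
Proof. induction 1 as [|k _ IH]; [lra|]. rewrite half_pow_S; pose proof (half_pow_pos k); lra. Qed.

Lemma half_pow_small (d : R) : 0 < d -> exists m, half_pow m <= d.
Proof.
  intros Hd. destruct (pow_lt_1_zero (/ 2)) with (y := d) as [N HN];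
    [rewrite Rabs_right; lra | exact Hd|].
  exists N. specialize (HN N (le_n _)).
  rewrite Rabs_right in HN by (apply Rle_ge, pow_le; lra). unfold half_pow; lra.
Qed.

Lemma geometric_drift (x : nat -> R) (c : R) :
  (forall m, Rabs (x (S m) - x m) <= c * half_pow m) ->
  forall j m, Rabs (x (j + m)%nat - x m) <= 2 * c * half_pow m - 2 * c * half_pow (j + m).
Proof.
  intros Hinc. induction j as [|j IH]; intros m.
  - simpl. replace (x m - x m) with 0 by ring. rewrite Rabs_R0. lra.
  - replace (S j + m)%nat with (S (j + m)) by lia.
    replace (x (S (j + m)) - x m) with ((x (S (j + m)) - x (j + m)%nat) + (x (j + m)%nat - x m))
      by ring.
    pose proof (Rabs_triang (x (S (j + m)) - x (j + m)%nat) (x (j + m)%nat - x m)).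
    specialize (Hinc (j + m)%nat). specialize (IH m). rewrite half_pow_S. lra.
Qed.

Lemma real_geometric_limit (x : nat -> R) (c : R) :
  (forall m, Rabs (x (S m) - x m) <= c * half_pow m) ->
  exists l, forall m, Rabs (x m - l) <= 2 * c * half_pow m.
Proof.
  intros Hinc.
  assert (Hc : 0 <= c).
  { specialize (Hinc O). unfold half_pow in Hinc; simpl in Hinc.
    pose proof (Rabs_pos (x 1%nat - x 0%nat)); lra. }
  assert (Hdrift : forall j m, Rabs (x (j + m)%nat - x m) <= 2 * c * half_pow m).
  { intros j m. pose proof (geometric_drift x c Hinc j m).
    pose proof (half_pow_pos (j + m)); nra. }
  assert (Hcauchy : Cauchy_crit x).
  { intros eps Heps. destruct (half_pow_small (eps / (2 * c + 1))) as [N HN].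
    { apply Rdiv_lt_0_compat; lra. }
    assert (HNeps : 2 * c * half_pow N < eps).
    { apply (Rmult_le_compat_l (2 * c + 1)) in HN; [|lra].
      replace ((2 * c + 1) * (eps / (2 * c + 1))) with eps in HN by (field; lra).
      pose proof (half_pow_pos N); nra. }
    exists N. intros n m Hn Hm. unfold Rdist.
    destruct (Nat.le_ge_cases n m).
    - replace m with ((m - n) + n)%nat by lia. rewrite Rabs_minus_sym.
      pose proof (Hdrift (m - n)%nat n). pose proof (half_pow_antitone N n Hn). nra.
    - replace n with ((n - m) + m)%nat by lia.
      pose proof (Hdrift (n - m)%nat m). pose proof (half_pow_antitone N m Hm). nra. }
  destruct (R_complete x Hcauchy) as [l Hl]. exists l. intros m.
  destruct (Rle_dec (Rabs (x m - l)) (2 * c * half_pow m)) as [|Hfar]; [assumption|]. exfalso.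
  destruct (Hl (Rabs (x m - l) - 2 * c * half_pow m)) as [N HN]; [lra|].
  specialize (HN (N + m)%nat ltac:(lia)). unfold Rdist in HN.
  pose proof (Hdrift N m).
  pose proof (Rabs_triang (x m - x (N + m)%nat) (x (N + m)%nat - l)) as Htri.
  rewrite Rabs_minus_sym in Htri.
  replace (x m - x (N + m)%nat + (x (N + m)%nat - l)) with (x m - l) in Htri by ring. lra.
Qed.

Lemma complex_geometric_limit (x : nat -> Cpx) (c : R) :
  (forall m, Cmod (Csub (x (S m)) (x m)) <= c * half_pow m) ->
  exists l, forall m, Cmod (Csub (x m) l) <= 4 * c * half_pow m.
Proof.
  intros Hinc.
  destruct (real_geometric_limit (fun m => fst (x m)) c) as [l1 H1].
  { intros m. eapply Rle_trans; [|apply Hinc]. apply (Rabs_fst_le_Cmod (Csub _ _)). }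
  destruct (real_geometric_limit (fun m => snd (x m)) c) as [l2 H2].
  { intros m. eapply Rle_trans; [|apply Hinc]. apply (Rabs_snd_le_Cmod (Csub _ _)). }
  exists (l1, l2). intros m. eapply Rle_trans; [apply Cmod_le_Rabs_sum|].
  specialize (H1 m); specialize (H2 m). simpl in *; lra.
Qed.

Fixpoint compose_upto (tau : nat -> nat -> nat) (m n : nat) : nat :=
  match m with O => n | S m' => tau m' (compose_upto tau m' n) end.

Lemma bijN_compose_upto (tau : nat -> nat -> nat) :
  (forall m, bijN (tau m)) -> forall m, bijN (compose_upto tau m).
Proof.
  intros Htau m. induction m as [|m IH]; [apply bijN_id|].
  apply (bijN_comp (tau m) (compose_upto tau m)); [apply Htau | exact IH].
Qed.

(* Composing the matching
   bijections turns each index n into a track of points, whose limits form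
   the limit divisor. *)
Lemma close_complete (A B : nat -> nat -> Cpx) (c : R) :
  (forall m, close (c * half_pow m) (A (S m)) (B (S m)) (A m) (B m)) ->
  exists at_ bt, forall m, close (4 * c * half_pow m) (A m) (B m) at_ bt.
Proof.
  intros Hstep. unfold close in Hstep.
  destruct (choice _ Hstep) as [tau Htau].
  set (pi := compose_upto tau).
  assert (Hpi : forall m, bijN (pi m)) by (apply bijN_compose_upto; intros m; apply Htau).
  assert (Htrack : forall n, exists la lb, forall m,
            Cmod (Csub (A m (pi m n)) la) <= 4 * c * half_pow m /\
            Cmod (Csub (B m (pi m n)) lb) <= 4 * c * half_pow m).
  { intros n.
    destruct (complex_geometric_limit (fun m => A m (pi m n)) c) as [la Ha];
      [intros m; apply Htau|].
    destruct (complex_geometric_limit (fun m => B m (pi m n)) c) as [lb Hb];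
      [intros m; apply Htau|].
    exists la, lb; intros m; split; [apply Ha | apply Hb]. }
  destruct (choice _ Htrack) as [at_ Hat]. destruct (choice _ Hat) as [bt Hbt].
  exists at_, bt. intros m. exists (pi m); split; [apply Hpi|]. intros n; apply Hbt.
Qed.

Lemma bijN_eventually_above (s : nat -> nat) : bijN s ->
  forall N, exists M, forall n, (M <= n)%nat -> (N <= s n)%nat.
Proof.
  intros [g [Hgs Hsg]] N. induction N as [|N [M HM]].
  - exists O; intros; lia.
  - exists (Nat.max M (S (g N))). intros n Hn.
    assert (s n <> N) by (intros E; rewrite <- E, Hgs in Hn; lia).
    specialize (HM n ltac:(lia)). lia.
Qed.

Lemma no_finite_accum_close (a a' : nat -> Cpx) (s : nat -> nat) (e : R) :
  no_finite_accum a -> bijN s -> (forall n, Cmod (Csub (a (s n)) (a' n)) <= e) ->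
  no_finite_accum a'.
Proof.
  intros Ha Hs Hclose M. destruct (Ha (M + e)) as [N HN].
  destruct (bijN_eventually_above s Hs N) as [K HK]. exists K. intros n Hn.
  specialize (HN (s n) (HK n Hn)). specialize (Hclose n).
  pose proof (Cmod_le_dist_add (a (s n)) (a' n)). lra.
Qed.

Lemma divisor_close (a b a' b' : nat -> Cpx) (e : R) :
  divisor a b -> close e a b a' b' -> divisor a' b'.
Proof.
  intros [Ha Hb] [s [Hs Hclose]]. split.
  - apply (no_finite_accum_close a a' s e Ha Hs); intros n; apply Hclose.
  - apply (no_finite_accum_close b b' s e Hb Hs); intros n; apply Hclose.
Qed.

Theorem mainTheorem10 (a b : nat -> Cpx) :
  divisor a b -> ap_regular a b ->
  forall h : nat -> Cpx,
    exists (phi : nat -> nat) (at_ bt : nat -> Cpx) (sigma : nat -> nat -> nat),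
      strictly_increasing phi /\
      divisor at_ bt /\ ap_regular at_ bt /\
      (forall k : nat, bijN (sigma k)) /\
      (forall eps : R, 0 < eps -> exists K : nat, forall k : nat, (K <= k)%nat ->
         forall n : nat,
           Cmod (Csub (Cadd (a (sigma k n)) (h (phi k))) (at_ n)) <= eps /\
           Cmod (Csub (Cadd (b (sigma k n)) (h (phi k))) (bt n)) <= eps).
Proof.
  intros Hdiv Hap h.
  destruct (diagonal_extraction Cpx (fun m p k => close (half_pow m)
              (translate a (h k)) (translate b (h k)) (translate a p) (translate b p)))
    as [phi [p [Hphi Hnear]]].
  { intros m S HS. apply refine_translates; [exact Hap | apply half_pow_pos | exact HS]. }
  (* the centres form a Cauchy sequence, with a limit divisor (at_, bt) *)
  assert (Hcauchy : forall m, close (2 * half_pow m)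
            (translate a (p (S m))) (translate b (p (S m))) (translate a (p m)) (translate b (p m))).
  { intros m. apply close_weaken with (half_pow (S m) + half_pow m);
      [rewrite half_pow_S; pose proof (half_pow_pos m); lra|].
    apply close_trans with (translate a (h (phi (S m)))) (translate b (h (phi (S m)))).
    - apply close_sym, Hnear; lia.
    - apply Hnear; lia. }
  destruct (close_complete (fun m => translate a (p m)) (fun m => translate b (p m)) 2 Hcauchy)
    as [at_ [bt Hlim]].
  assert (Hconv : forall k, close (9 * half_pow k)
            (translate a (h (phi k))) (translate b (h (phi k))) at_ bt).
  { intros k. apply close_weaken with (half_pow k + 4 * 2 * half_pow k); [lra|].
    apply close_trans with (translate a (p k)) (translate b (p k)); [apply Hnear; lia | apply Hlim]. }
  unfold close in Hconv. destruct (choice _ Hconv) as [sigma Hsigma].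
  exists phi, at_, bt, sigma. split; [exact Hphi|]. split; [|split; [|split]].
  - apply divisor_close with a b (Cmod (p O) + 4 * 2 * half_pow O); [exact Hdiv|].
    apply close_trans with (translate a (p O)) (translate b (p O));
      [apply close_translate_self | apply Hlim].
  - apply ap_regular_limit. intros e He.
    destruct (half_pow_small (e / 8)) as [m Hm]; [lra|].
    exists (translate a (p m)), (translate b (p m)).
    split; [apply ap_regular_translate; exact Hap|].
    apply close_weaken with (4 * 2 * half_pow m); [lra | apply Hlim].
  - intros k; apply Hsigma.
  - intros eps Heps. destruct (half_pow_small (eps / 9)) as [K HK]; [lra|].
    exists K. intros k HKk n. destruct (proj2 (Hsigma k) n) as [Ha Hb].
    pose proof (half_pow_antitone K k HKk). unfold translate in Ha, Hb. split; lra.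
Qed.
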